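(* Let $\mathcal{F}$ be an argumentation framework and $S\subseteq A_{\mathcal{F}}$. For each $a\in A_{\mathcal{F}}$ and each ordinal $\alpha$, $$C^\alpha_S(a)=\{b: a\Rightarrow^{A_{\mathcal{F}}\setminus\Delta^\alpha_{\mathcal{F},S}}_{\mathcal{F}}b\ \text{ and }\ b\Rightarrow^{A_{\mathcal{F}}\setminus\Delta^\alpha_{\mathcal{F},S}}_{\mathcal{F}}a\}.$$
   Context: An argumentation framework is $\mathcal{F}=(A_{\mathcal{F}},R_{\mathcal{F}})$ with $R_{\mathcal{F}}\subseteq A_{\mathcal{F}}\times A_{\mathcal{F}}$; $a\rightarrow b$ means $(a,b)\in R_{\mathcal{F}}$. $\mathcal{F}|_B=(A_{\mathcal{F}}\cap B,R_{\mathcal{F}}\cap(B\times B))$. $\mathrm{SCC}(a)$ is the set of $b$ with directed attack paths (possibly of length 0) from $a$ to $b$ and from $b$ to $a$. $D_S(X)=\{b\in X:\exists a\in S\setminus X,\ a\rightarrow b\}$. $C^0_S(a)=\mathrm{SCC}(a)$; $C^{\alpha+1}_S(a)$ = the strongly connected component of $a$ in $\mathcal{F}|_{C^\alpha_S(a)\setminus D_S(C^\alpha_S(a))}$ (empty if $a$ is not in that set); for limit $\lambda$, $C^\lambda_S(a)$ = the strongly connected component of $a$ in $\mathcal{F}|_{\bigcap_{\alpha<\lambda}C^\alpha_S(a)}$. $a\Rightarrow^B_{\mathcal{F}}b$ ($b$ reachable from $a$ modulo $B$) means there is a directed attack path from $a$ to $b$ in $\mathcal{F}|_B$. For $D\subseteq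 A_{\mathcal{F}}$, $\Delta_{\mathcal{F},S}(D)=\{a\in A_{\mathcal{F}}:\exists b\in S\,(b\rightarrow a\text{ and not }a\Rightarrow^{A_{\mathcal{F}}\setminus D}_{\mathcal{F}}b)\}$. The iterates are $\Delta^0_{\mathcal{F},S}=\emptyset$, $\Delta^{\alpha+1}_{\mathcal{F},S}=\Delta_{\mathcal{F},S}(\Delta^\alpha_{\mathcal{F},S})$, and $\Delta^\lambda_{\mathcal{F},S}=\bigcup_{\alpha<\lambda}\Delta^\alpha_{\mathcal{F},S}$ for limit $\lambda$. *)

(* Argumentation frameworks over an arbitrary (possibly infinite)
   carrier type T: A_F = all of T, attack relation R : T -> T -> Prop.
   Sets are predicates T -> Prop.  Ordinals are represented by elements of an
   arbitrary well-ordered type (O, lt); transfinite sequences are defined by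
   well-founded recursion along lt. *)
From Stdlib Require Import Relations Wellfounded.

Section AF.
Variable T : Type.
Variable R : T -> T -> Prop.

Definition edge_in (B : T -> Prop) (x y : T) : Prop := B x /\ B y /\ R x y.

(* a =>^B_F b : directed attack path (possibly of length 0) from a to b in F|_B *)
Definition reach (B : T -> Prop) (a b : T) : Prop :=
  B a /\ clos_refl_trans T (edge_in B) a b.

(* strongly connected component of a in F|_B (empty if a is not in B) *)
Definition scc_in (B : T -> Prop) (a b : T) : Prop := reach B a b /\ reach B b a.

Definition DS (S X : T -> Prop) : T -> Prop :=
  fun b => X b /\ exists a, S a /\ ~ X a /\ R a b.

Definition Delta_step (S D : T -> Prop) : T -> Prop :=
  fun a => exists b, S b /\ R b a /\ ~ reach (fun x => ~ D x) a b.

Variable O : Type.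
Variable lt : O -> O -> Prop.
Hypothesis wf : well_founded lt.

Definition is_pred (beta alpha : O) : Prop :=
  lt beta alpha /\ forall g, lt g alpha -> g = beta \/ lt g beta.

(* Delta^alpha_{F,S}: empty at 0, Delta_step of the predecessor at successors,
   union of earlier stages at limits (0 is covered by the empty union). *)
Definition Delta_iter (S : T -> Prop) : O -> T -> Prop :=
  Fix wf (fun _ => T -> Prop)
    (fun alpha rec x =>
       (exists beta (h : lt beta alpha), is_pred beta alpha /\ Delta_step S (rec beta h) x)
       \/ ((~ exists beta, is_pred beta alpha) /\
           exists beta (h : lt beta alpha), rec beta h x)).

(* C^alpha_S(a): SCC(a) at 0; SCC of a in F|_{C \ D_S(C)} at successors;
   SCC of a in F|_{intersection of earlier stages} at limits (the empty
   intersection at 0 is all of A_F, giving SCC(a)). *)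
Definition C_iter (S : T -> Prop) (a : T) : O -> T -> Prop :=
  Fix wf (fun _ => T -> Prop)
    (fun alpha rec b =>
       (exists beta (h : lt beta alpha), is_pred beta alpha /\
          scc_in (fun x => rec beta h x /\ ~ DS S (rec beta h) x) a b)
       \/ ((~ exists beta, is_pred beta alpha) /\
           scc_in (fun x => forall beta (h : lt beta alpha), rec beta h x) a b)).
End AF.

(* The component of a in F|_B depends only on which of
   its own members lie in B, so two restrictions of F that agree on each
   other's components of a have the same component of a.  At a successor
   alpha = beta + 1 let C be the component of a in F|_{not Delta^beta}.  As
   Delta^beta is contained in its own Delta-step, a member x of C attacked by
   some c in S fails to reach c outside Delta^beta exactly when c lies outside
   C; so removing D_S(C) from C removes precisely the members of Delta^alpha.
   At a limit, the members of the intersection of the earlier components lie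
   outside every earlier Delta^beta, and a member of the component of a
   outside their union lies in every earlier component. *)
From Stdlib Require Import Relations Wellfounded.
From Stdlib Require Import Classical FunctionalExtensionality.

Section Reachability.
Context {T : Type} {R : T -> T -> Prop}.

Lemma clos_edge_in_mono (B B' : T -> Prop) :
  (forall x, B x -> B' x) ->
  forall u v, clos_refl_trans T (edge_in T R B) u v ->
              clos_refl_trans T (edge_in T R B') u v.
Proof.
  intros HB u v H; induction H as [u v [Bu [Bv Ruv]]| |]; eauto using rt_refl, rt_trans.
  apply rt_step; repeat split; auto.
Qed.

Lemma reach_mono (B B' : T -> Prop) :
  (forall x, B x -> B' x) -> forall u v, reach T R B u v -> reach T R B' u v.
Proof. intros HB u v [Bu Huv]; split; eauto using clos_edge_in_mono. Qed.

Lemma reach_trans {B : T -> Prop} {u v w} :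
  reach T R B u v -> reach T R B v w -> reach T R B u w.
Proof. intros [Bu Huv] [_ Hvw]; split; eauto using rt_trans. Qed.

Lemma reach_step {B : T -> Prop} {u v} :
  B u -> B v -> R u v -> reach T R B u v.
Proof. intros Bu Bv Ruv; split; auto; apply rt_step; repeat split; auto. Qed.

Lemma reach_in_r {B : T -> Prop} {u v} : reach T R B u v -> B v.
Proof. intros [Bu Huv]; induction Huv as [u v [_ [Bv _]]| |]; auto. Qed.

Lemma scc_in_mono (B B' : T -> Prop) :
  (forall x, B x -> B' x) -> forall u v, scc_in T R B u v -> scc_in T R B' u v.
Proof. intros HB u v [Huv Hvu]; split; eauto using reach_mono. Qed.

Lemma scc_in_ext (B B' : T -> Prop) :
  (forall x, B x <-> B' x) -> forall u v, scc_in T R B u v <-> scc_in T R B' u v.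
Proof. intros HB u v; split; apply scc_in_mono; firstorder. Qed.

Lemma scc_in_r {B : T -> Prop} {u v} : scc_in T R B u v -> B v.
Proof. intros [Huv _]; exact (reach_in_r Huv). Qed.

(* A path that starts in the component of a and ends at a vertex reaching a
   never leaves that component. *)
Lemma scc_in_confine (B : T -> Prop) a b :
  scc_in T R B a b -> scc_in T R (fun x => B x /\ scc_in T R B a x) a b.
Proof.
  set (B' := fun x => B x /\ scc_in T R B a x).
  assert (path_in_scc : forall u v, clos_refl_trans T (edge_in T R B) u v ->
            scc_in T R B a u -> reach T R B v a -> reach T R B' u v).
  { intros u v Huv; apply clos_rt_rt1n in Huv.
    induction Huv as [u|u w v [Bu [Bw Ruw]] Hwv IH]; intros [Hau Hua] Hva.
    - split; [split; [exact (reach_in_r Hau)|split; auto]|apply rt_refl].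
    - assert (Haw : scc_in T R B a w).
      { split.
        - exact (reach_trans Hau (reach_step Bu Bw Ruw)).
        - exact (reach_trans (conj Bw (clos_rt1n_rt _ _ _ _ Hwv)) Hva). }
      apply (reach_trans (v := w)); [|exact (IH Haw Hva)].
      apply reach_step; auto; split; auto; split; auto. }
  intros [Hab Hba].
  assert (Ba : B a) by exact (proj1 Hab).
  assert (Haa : scc_in T R B a a) by (split; split; auto using rt_refl).
  split.
  - apply path_in_scc; [exact (proj2 Hab)|exact Haa|exact Hba].
  - apply path_in_scc; [exact (proj2 Hba)|split; auto|split; auto using rt_refl].
Qed.

Lemma scc_in_eq_on_scc (B B' : T -> Prop) a :
  (forall x, B x -> scc_in T R B a x -> B' x) ->
  (forall x, B' x -> scc_in T R B' a x -> B x) ->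
  forall b, scc_in T R B a b <-> scc_in T R B' a b.
Proof.
  intros HBB' HB'B b; split; intro Hab; apply scc_in_confine in Hab;
    revert Hab; apply scc_in_mono; intros x [Bx Hax]; auto.
Qed.

Lemma Delta_step_mono S (D D' : T -> Prop) :
  (forall x, D x -> D' x) ->
  forall x, Delta_step T R S D x -> Delta_step T R S D' x.
Proof.
  intros HD x [c [Sc [Rcx Hxc]]]; exists c; repeat split; auto.
  contradict Hxc; revert Hxc; apply reach_mono; auto.
Qed.

Lemma scc_in_Delta_step {S} {D X : T -> Prop} {a} :
  (forall x, D x -> Delta_step T R S D x) ->
  (forall x, X x <-> scc_in T R (fun y => ~ D y) a x) ->
  forall b, scc_in T R (fun x => X x /\ ~ DS T R S X x) a b <->
            scc_in T R (fun x => ~ Delta_step T R S D x) a b.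
Proof.
  intros D_sub_step HX; apply scc_in_eq_on_scc.
  - intros x [Xx Hx] _ [c [Sc [Rcx Hxc]]].
    apply HX in Xx.
    destruct (classic (X c)) as [Xc|nXc].
    + apply HX in Xc; apply Hxc.
      exact (reach_trans (proj2 Xx) (proj1 Xc)).
    + apply Hx; split; [apply HX; exact Xx|exists c; auto].
  - intros x Hx Hax.
    assert (Xx : scc_in T R (fun y => ~ D y) a x).
    { revert Hax; apply scc_in_mono; intros y Hy Dy; exact (Hy (D_sub_step y Dy)). }
    split; [apply HX; exact Xx|].
    intros [_ [c [Sc [nXc Rcx]]]]; apply nXc, HX.
    assert (Hxc : reach T R (fun y => ~ D y) x c).
    { apply NNPP; intro Hxc; apply Hx; exists c; auto. }
    destruct Xx as [Hax' Hxa]; split.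
    + exact (reach_trans Hax' Hxc).
    + apply (reach_trans (v := x)); [|exact Hxa].
      exact (reach_step (reach_in_r Hxc) (reach_in_r Hax') Rcx).
Qed.

Lemma scc_in_bigcap {I : Type} {P : I -> Prop} {C D : I -> T -> Prop} {a} :
  (forall i x, P i -> C i x <-> scc_in T R (fun y => ~ D i y) a x) ->
  forall b, scc_in T R (fun x => forall i, P i -> C i x) a b <->
            scc_in T R (fun x => ~ exists i, P i /\ D i x) a b.
Proof.
  intro HC; apply scc_in_eq_on_scc.
  - intros x Hx _ [i [Pi Dx]].
    exact (scc_in_r (proj1 (HC i x Pi) (Hx i Pi)) Dx).
  - intros x _ Hax i Pi; apply HC; auto.
    revert Hax; apply scc_in_mono; intros y Hy Dy; eauto.
Qed.

End Reachability.

Section Iterates.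
Context {T : Type} {R : T -> T -> Prop} {S : T -> Prop}.
Context {O : Type} {lt : O -> O -> Prop} {wf : well_founded lt}.
Hypothesis lt_trans : forall x y z, lt x y -> lt y z -> lt x z.

Lemma Fix_pred_eq (F : forall x, (forall y, lt y x -> T -> Prop) -> T -> Prop) x :
  Fix wf (fun _ => T -> Prop) F x = F x (fun y _ => Fix wf (fun _ => T -> Prop) F y).
Proof.
  apply (Fix_eq wf (fun _ => T -> Prop) F); intros z f g Hfg.
  replace g with f; [reflexivity|].
  extensionality y; extensionality h; apply Hfg.
Qed.

Lemma lt_irrefl x : ~ lt x x.
Proof. induction (wf x) as [x _ IH]; intro Hxx; exact (IH x Hxx Hxx). Qed.

Lemma is_pred_unique {beta1 beta2 alpha} :
  is_pred O lt beta1 alpha -> is_pred O lt beta2 alpha -> beta1 = beta2.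
Proof.
  intros [lt1 H1] [lt2 H2].
  destruct (H1 beta2 lt2) as [->|lt21]; auto.
  destruct (H2 beta1 lt1) as [->|lt12]; auto.
  destruct (lt_irrefl beta1); eauto.
Qed.

Notation Delta := (Delta_iter T R O lt wf S).

Lemma Delta_iter_succ {beta alpha x} : is_pred O lt beta alpha ->
  Delta alpha x <-> Delta_step T R S (Delta beta) x.
Proof.
  intro Hpred; unfold Delta_iter at 1; rewrite Fix_pred_eq; split.
  - intros [[beta' [_ [Hpred' Hx]]]|[Hno _]].
    + rewrite (is_pred_unique Hpred Hpred'); exact Hx.
    + destruct Hno; eauto.
  - intro Hx; left; exists beta, (proj1 Hpred); auto.
Qed.

Lemma Delta_iter_lim {alpha x} : ~ (exists beta, is_pred O lt beta alpha) ->
  Delta alpha x <-> exists beta, lt beta alpha /\ Delta beta x.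
Proof.
  intro Hno; unfold Delta_iter at 1; rewrite Fix_pred_eq; split.
  - intros [[beta [_ [Hpred _]]]|[_ [beta [Hlt Hx]]]]; [destruct Hno|]; eauto.
  - intros [beta [Hlt Hx]]; right; split; eauto.
Qed.

Lemma Delta_iter_sub_step alpha x :
  Delta alpha x -> Delta_step T R S (Delta alpha) x.
Proof.
  revert x; induction (wf alpha) as [alpha _ IH]; intros x Hx.
  destruct (classic (exists beta, is_pred O lt beta alpha)) as [[beta Hpred]|Hno].
  - apply (Delta_iter_succ Hpred) in Hx as Hstep.
    revert Hstep; apply Delta_step_mono; intros y Hy.
    exact (proj2 (Delta_iter_succ Hpred) (IH beta (proj1 Hpred) y Hy)).
  - apply (Delta_iter_lim Hno) in Hx as [beta [Hlt Hx]].
    apply (Delta_step_mono S (Delta beta)); [|exact (IH beta Hlt x Hx)].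
    intros y Hy; apply (Delta_iter_lim Hno); eauto.
Qed.

Context {a : T}.
Notation C := (C_iter T R O lt wf S a).

Lemma C_iter_succ {beta alpha b} : is_pred O lt beta alpha ->
  C alpha b <-> scc_in T R (fun x => C beta x /\ ~ DS T R S (C beta) x) a b.
Proof.
  intro Hpred; unfold C_iter at 1; rewrite Fix_pred_eq; split.
  - intros [[beta' [_ [Hpred' Hb]]]|[Hno _]].
    + rewrite (is_pred_unique Hpred Hpred'); exact Hb.
    + destruct Hno; eauto.
  - intro Hb; left; exists beta, (proj1 Hpred); auto.
Qed.

Lemma C_iter_lim {alpha b} : ~ (exists beta, is_pred O lt beta alpha) ->
  C alpha b <-> scc_in T R (fun x => forall beta, lt beta alpha -> C beta x) a b.
Proof.
  intro Hno; unfold C_iter at 1; rewrite Fix_pred_eq; split.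
  - intros [[beta [_ [Hpred _]]]|[_ Hb]]; [destruct Hno|]; eauto.
  - intro Hb; right; split; auto.
Qed.

End Iterates.

Theorem lemma2 (T : Type) (R : T -> T -> Prop) (S : T -> Prop)
  (O : Type) (lt : O -> O -> Prop) (wf : well_founded lt)
  (lt_trans : forall x y z, lt x y -> lt y z -> lt x z)
  (lt_total : forall x y, lt x y \/ x = y \/ lt y x)
  (a : T) (alpha : O) :
  forall b : T,
    @C_iter T R O lt wf S a alpha b <->
    @scc_in T R (fun x => ~ @Delta_iter T R O lt wf S alpha x) a b.
Proof.
  induction (wf alpha) as [alpha _ IH]; intro b.
  destruct (classic (exists beta, is_pred O lt beta alpha)) as [[beta Hpred]|Hno].
  - rewrite (C_iter_succ lt_trans Hpred),
      (scc_in_Delta_step (Delta_iter_sub_step lt_trans beta) (IH beta (proj1 Hpred))).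
    apply scc_in_ext; intro x; rewrite (Delta_iter_succ lt_trans Hpred); tauto.
  - rewrite (C_iter_lim Hno), (scc_in_bigcap (fun beta x Hlt => IH beta Hlt x)).
    apply scc_in_ext; intro x; rewrite (Delta_iter_lim Hno); tauto.
Qed.
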